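(* Let $V\subseteq\mathcal{V}$ be a set of interpretations. There is an ADF $D$ with $\mathrm{prf}(D)=V$ iff there is an adm-characterization for some $V'\subseteq\mathcal{V}$ with $V\subseteq V'$ and $\max_{\leq_i}(V')=V$, where $\max_{\leq_i}(V')$ denotes the set of $\leq_i$-maximal elements of $V'$.
   Context: Let $A$ be a fixed finite set of statements. An interpretation is a mapping $v:A\to\{\mathbf{t},\mathbf{f},\mathbf{u}\}$; $\mathcal{V}$ is the set of all interpretations and $\mathcal{V}_2$ the set of two-valued ones. The information ordering is $\mathbf{u}<_i\mathbf{t}$, $\mathbf{u}<_i\mathbf{f}$, extended pointwise. For $v\in\mathcal{V}$, $[v]_2$ is the set of two-valued interpretations $w$ with $v\leq_i w$. An ADF is $D=(A,L,C)$ where each statement $a$ has an acceptance formula $\varphi_a$ over its parents. The operator $\Gamma_D$ maps $v$ to the interpretation assigning to each $a$ the greatest lower bound w.r.t. $\leq_i$ (consensus: $\mathbf{t}$ if all are $\mathbf{t}$, $\mathbf{f}$ if all are $\mathbf{f}$, otherwise $\mathbf{u}$) of $\{w(\varphi_a)\mid w\in[v]_2\}$. $v$ is admissible iff $v\leq_i\Gamma_D(v)$; preferred iff it is $\leq_i$-maximal admissible; $\mathrm{prf}(D)$ is the set of preferred interpretations. A function $f:\mathcal{V}_2\to\mathcal{V}_2$ is an adm-characterization of a set $V'$ iff for each $v\in\mathcal{V}$: $v\in V'$ iff for every $a\in A$, $v(a)\neq\mathbf{u}$ implies $f(v_2)(a)=v(a)$ for all $v_2\in[v]_2$. (It is known that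 a set is the admissible semantics of some ADF iff it has an adm-characterization.) *)

From mathcomp Require Import all_boot.
Set Implicit Arguments. Unset Strict Implicit. Unset Printing Implicit Defensive.

Inductive tv := tv_t | tv_f | tv_u.

Section ADF.
Variable A : finType.

Definition interp := {ffun A -> tv}.
Definition interp2 := {ffun A -> bool}.

Definition tv_of_bool (b : bool) : tv := if b then tv_t else tv_f.

Definition info_le (v w : interp) : Prop :=
  forall a, v a = tv_u \/ v a = w a.

(* w \in [v]_2 : w two-valued with v <=_i w *)
Definition in_compl2 (v : interp) (w : interp2) : bool :=
  [forall a, match v a with tv_u => true | tv_t => w a | tv_f => ~~ w a end].

Inductive formula :=
| FAtom of A
| FTop
| FBot
| FNeg of formula
| FAnd of formula & formula
| FOr of formula & formula.

Fixpoint feval (w : interp2) (phi : formula) : bool :=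
  match phi with
  | FAtom a => w a
  | FTop => true
  | FBot => false
  | FNeg p => ~~ feval w p
  | FAnd p q => feval w p && feval w q
  | FOr p q => feval w p || feval w q
  end.

Fixpoint fvars (phi : formula) : seq A :=
  match phi with
  | FAtom a => [:: a]
  | FTop | FBot => [::]
  | FNeg p => fvars p
  | FAnd p q | FOr p q => fvars p ++ fvars q
  end.

Record ADF := MkADF {
  links : rel A;                         (* links b a : (b,a) \in L *)
  acc : A -> formula;
  acc_parents : forall a b, b \in fvars (acc a) -> links b a
}.

Definition Gamma (D : ADF) (v : interp) : interp :=
  [ffun a =>
     if [forall w, in_compl2 v w ==> feval w (acc D a)] then tv_t
     else if [forall w, in_compl2 v w ==> ~~ feval w (acc D a)] then tv_f
     else tv_u].

Definition admissible (D : ADF) (v : interp) : Prop := info_le v (Gamma D v).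

Definition preferred (D : ADF) (v : interp) : Prop :=
  admissible D v /\ forall v', admissible D v' -> info_le v v' -> v' = v.

Definition info_max (V' : interp -> Prop) (v : interp) : Prop :=
  V' v /\ forall v', V' v' -> info_le v v' -> v' = v.

Definition adm_characterization (V' : interp -> Prop) (f : interp2 -> interp2) : Prop :=
  forall v : interp,
    V' v <-> (forall a, v a <> tv_u ->
                forall w : interp2, in_compl2 v w -> tv_of_bool (f w a) = v a).

End ADF.

From mathcomp Require Import all_boot.

Set Implicit Arguments.
Unset Strict Implicit.
Unset Printing Implicit Defensive.

(* Admissibility of an interpretation v in D only asks that every two-valued
   completion of v evaluate each acceptance formula to v's value wherever v is
   defined, so it is characterized by the map w |-> (a |-> w(phi_a)).
   Conversely any map f : V_2 -> V_2 is of this form: take phi_a to be a DNF of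
   the boolean function w |-> f w a.  Hence the admissible sets of ADFs are
   exactly the sets with an adm-characterization, and preferred interpretations
   are the <=_i-maximal admissible ones. *)

Section Characterization.
Variable A : finType.

Definition minterm (w' : interp2 A) : formula A :=
  foldr (@FAnd A) (@FTop A)
    [seq (if w' b then FAtom b else FNeg (FAtom b)) | b <- enum A].

Lemma feval_minterm w w' : feval w (minterm w') = (w == w').
Proof.
have -> : (w == w') = all (fun b => w b == w' b) (enum A).
  apply/eqP/allP => [-> b _ //|eq_ww']; apply/ffunP => b; apply/eqP.
  by apply: eq_ww'; rewrite mem_enum.
rewrite /minterm; elim: (enum A) => //= b s IH; rewrite IH.
by case: (w' b) => /=; case: (w b).
Qed.

Definition dnf (g : interp2 A -> bool) : formula A :=
  foldr (@FOr A) (@FBot A) [seq minterm w' | w' <- enum (interp2 A) & g w'].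

Lemma feval_dnf g w : feval w (dnf g) = g w.
Proof.
have -> : g w = has (fun w' => w == w') [seq w' <- enum (interp2 A) | g w'].
  apply/idP/hasP => [gw|[w']].
    by exists w; rewrite // mem_filter gw mem_enum.
  by rewrite mem_filter => /andP[gw' _] /eqP ->.
rewrite /dnf; elim: [seq _ <- _ | _] => //= w' s ->.
by rewrite feval_minterm.
Qed.

Lemma in_compl2_exists (v : interp A) : exists w, in_compl2 v w.
Proof.
exists [ffun b => if v b is tv_t then true else false].
by apply/forallP => b; rewrite ffunE; case: (v b).
Qed.

Definition acc_map (D : ADF A) (w : interp2 A) : interp2 A :=
  [ffun a => feval w (acc D a)].

Lemma Gamma_agreeP (D : ADF A) (v : interp A) a : v a <> tv_u ->
  Gamma D v a = v a <->
  (forall w, in_compl2 v w -> tv_of_bool (acc_map D w a) = v a).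
Proof.
have [w0 vw0] := in_compl2_exists v.
rewrite ffunE; case: (v a) => // _; split=> [+ w vw | acc_va]; rewrite ?ffunE.
- case: ifP => [/forallP/(_ w) | _]; first by rewrite vw => /= ->.
  by case: ifP.
- rewrite ifT //; apply/forallP => w; apply/implyP => /acc_va.
  by rewrite ffunE; case: feval.
- case: ifP => [// | _]; case: ifP => [/forallP/(_ w) | //].
  by rewrite vw => /= /negbTE ->.
- have acc_f w : in_compl2 v w -> ~~ feval w (acc D a).
    by move=> /acc_va; rewrite ffunE; case: feval.
  (* [v]_2 is nonempty, so all completions giving f excludes consensus t. *)
  rewrite ifF ?ifT //; first by apply/forallP => w; apply/implyP => /acc_f.
  by apply/negbTE/forallP => /(_ w0); rewrite vw0 /= (negbTE (acc_f w0 vw0)).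
Qed.

Lemma admissibleP (D : ADF A) (v : interp A) :
  admissible D v <-> (forall a, v a <> tv_u ->
     forall w, in_compl2 v w -> tv_of_bool (acc_map D w a) = v a).
Proof.
split=> [adm_v a va | accv a].
- by apply/Gamma_agreeP => //; case: (adm_v a).
- case va: (v a); [right|right|by left]; rewrite -va;
    by apply/esym/Gamma_agreeP/accv; rewrite va.
Qed.

Lemma adm_characterization_admissible (D : ADF A) :
  adm_characterization (admissible D) (acc_map D).
Proof. exact: admissibleP. Qed.

Definition adf_of_map (f : interp2 A -> interp2 A) : ADF A :=
  @MkADF A (fun _ _ => true) (fun a => dnf (fun w => f w a)) (fun _ _ _ => isT).

Lemma acc_map_adf_of_map f : acc_map (adf_of_map f) =1 f.
Proof. by move=> w; apply/ffunP => a; rewrite ffunE feval_dnf. Qed.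

Lemma adm_characterization_ext (V' : interp A -> Prop) f g :
  f =1 g -> adm_characterization V' f -> adm_characterization V' g.
Proof.
move=> eq_fg charf v; apply: iff_trans (charf v) _.
by split=> accv a va w vw; [rewrite -eq_fg | rewrite eq_fg]; apply: accv.
Qed.

Lemma adm_characterization_unique (V1 V2 : interp A -> Prop) f :
  adm_characterization V1 f -> adm_characterization V2 f ->
  forall v, V1 v <-> V2 v.
Proof.
move=> char1 char2 v; exact: iff_trans (char1 v) (iff_sym (char2 v)).
Qed.

Lemma info_max_ext (V1 V2 : interp A -> Prop) :
  (forall v, V1 v <-> V2 v) -> forall v, info_max V1 v <-> info_max V2 v.
Proof.
move=> eqV v; split=> [[/eqV V2v maxv]|[/eqV V1v maxv]]; split=> // v' /eqV;
  exact: maxv.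
Qed.

End Characterization.

Theorem corollary1 (A : finType) (V : interp A -> Prop) :
  (exists D : ADF A, forall v : interp A, preferred D v <-> V v) <->
  (exists (V' : interp A -> Prop) (f : interp2 A -> interp2 A),
      adm_characterization V' f /\
      (forall v, V v -> V' v) /\
      (forall v, info_max V' v <-> V v)).
Proof.
split=> [[D prfD] | [V' [f [charV' [_ maxV']]]]].
- exists (admissible D), (acc_map D).
  split; first exact: adm_characterization_admissible.
  by split=> v; [case/prfD | exact: prfD].
- pose D := adf_of_map f; exists D => v.
  have admD : forall v, admissible D v <-> V' v.
    apply: adm_characterization_unique charV'.
    apply: adm_characterization_ext (acc_map_adf_of_map f) _.
    exact: adm_characterization_admissible.
  exact: iff_trans (info_max_ext admD v) (maxV' v).
Qed.
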